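(* Let $\nu$ be a positive integer and let $\alpha>1$, $\beta>1$ be real numbers satisfying $$\frac{2\nu+1}{2\lfloor \nu/\beta\rfloor+1}\leq\alpha\leq\frac{2\nu+1}{\sqrt{2}}.$$ Then $$S_{1}(\alpha):=\sup_{t\in\left(0,\frac{\alpha}{2\nu+1}\right]}\frac{\left|(-1)^{\nu}(2\nu+1)t-T_{2\nu+1}(t)\right|}{[(2\nu+1)t]^{2}}\leq u_1(\nu)\,\alpha+u_2(\nu),$$ where $$u_{1}(\nu)=\frac{(12\beta-8)\nu^{3}+(12\beta^{3}+18\beta)\nu^{2}+2\beta^{2}\nu}{3\beta^{3}(2\nu+1)^{3}},\qquad u_{2}(\nu)=\frac{2(\beta-1)^{2}\nu^{2}+2\beta(\beta-1)\nu}{\beta^{2}(2\nu+1)^{2}}.$$ In particular, taking $\beta=\tfrac52$, for every integer $\nu\ge 31$ and every $\alpha$ with $\frac{2\nu+1}{2\lfloor 2\nu/5\rfloor+1}\le\alpha\le\frac{2\nu+1}{\sqrt2}$, $$S_1(\alpha)\leq\frac{2344592}{31255875}\alpha+\frac{6076}{33075}.$$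
   Context: $T_k$ denotes the Chebyshev polynomial of the first kind: $T_0(t)=1$, $T_1(t)=t$, $T_{k+1}(t)=2tT_k(t)-T_{k-1}(t)$. $\lfloor m\rfloor$ denotes the largest integer not exceeding $m$. *)

From Stdlib Require Import Reals.
Open Scope R_scope.

Fixpoint cheb (k : nat) (t : R) {struct k} : R :=
  match k with
  | O => 1
  | S O => t
  | S ((S k'') as k') => 2 * t * cheb k' t - cheb k'' t
  end.

(* floor of a real number (Int_part x = up x - 1 is the floor) *)
Definition floorR (x : R) : R := IZR (Int_part x).

Definition ratio1 (nu : nat) (t : R) : R :=
  Rabs ((-1) ^ nu * (2 * INR nu + 1) * t - cheb (2 * nu + 1) t)
  / ((2 * INR nu + 1) * t) ^ 2.

(* "S_1(alpha) <= c" : c is an upper bound of the set whose supremum is S_1(alpha). *)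
Definition S1_le (nu : nat) (alpha c : R) : Prop :=
  forall t : R, 0 < t <= alpha / (2 * INR nu + 1) -> ratio1 nu t <= c.

Definition u1 (beta : R) (nu : nat) : R :=
  let n := INR nu in
  ((12 * beta - 8) * n ^ 3 + (12 * beta ^ 3 + 18 * beta) * n ^ 2 + 2 * beta ^ 2 * n)
  / (3 * beta ^ 3 * (2 * n + 1) ^ 3).

Definition u2 (beta : R) (nu : nat) : R :=
  let n := INR nu in
  (2 * (beta - 1) ^ 2 * n ^ 2 + 2 * beta * (beta - 1) * n)
  / (beta ^ 2 * (2 * n + 1) ^ 2).

From Stdlib Require Import Reals Lra Lia Psatz.
From Coquelicot Require Import Rcomplements.
Open Scope R_scope.

(* Put t = sin theta and N = 2 nu + 1.  Then T_N(t) = (-1)^nu sin (N theta), so the numerator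
   of the ratio is |x - sin y| with x = N t <= y = N theta, and it is at most
   (x - sin x) + (y - x).  The first term is at most E(alpha) x^2 with
   E(alpha) = 1/2 - 1/(2 alpha) + 1/(6 alpha^2) (Taylor's bound for alpha <= 3, the crude
   bound x^2/3 beyond); the second is at most alpha x^2 / (4 N^2) because
   asin t - t <= t^3/4 for t <= 1/sqrt 2.  It remains to check the algebraic inequality
   E(alpha) + alpha / (4 N^2) <= u1 alpha + u2, which follows from an explicit decomposition
   of the difference into nonnegative terms in 1/beta and 1/N, via the intermediate
   majorant Gmaj.  The lower bound on alpha is only needed to ensure alpha > 1. *)

Lemma cheb_cos k phi : cheb k (cos phi) = cos (INR k * phi).
Proof.
  enough (H : cheb k (cos phi) = cos (INR k * phi)
              /\ cheb (S k) (cos phi) = cos (INR (S k) * phi)) by apply H.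
  induction k as [|k [IH IHS]].
  - simpl. rewrite Rmult_0_l, Rmult_1_l, cos_0. split; reflexivity.
  - split; [exact IHS|].
    change (cheb (S (S k)) (cos phi))
      with (2 * cos phi * cheb (S k) (cos phi) - cheb k (cos phi)).
    rewrite IH, IHS.
    replace (INR (S (S k)) * phi) with (INR (S k) * phi + phi) by (rewrite !S_INR; ring).
    replace (INR k * phi) with (INR (S k) * phi - phi) by (rewrite S_INR; ring).
    rewrite cos_plus, cos_minus. ring.
Qed.

Lemma cos_plus_INR_PI n x : cos (x + INR n * PI) = (-1) ^ n * cos x.
Proof.
  induction n as [|n IH].
  - simpl. rewrite Rmult_0_l, Rplus_0_r. ring.
  - rewrite S_INR.
    replace (x + (INR n + 1) * PI) with (x + INR n * PI + PI) by ring.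
    rewrite neg_cos, IH. simpl. ring.
Qed.

Lemma cheb_odd_sin nu theta :
  cheb (2 * nu + 1) (sin theta) = (-1) ^ nu * sin ((2 * INR nu + 1) * theta).
Proof.
  rewrite <- cos_shift, cheb_cos.
  replace (INR (2 * nu + 1) * (PI / 2 - theta))
    with (PI / 2 - (2 * INR nu + 1) * theta + INR nu * PI)
    by (rewrite plus_INR, mult_INR; simpl; field).
  now rewrite cos_plus_INR_PI, cos_shift.
Qed.

Lemma ratio1_sin nu theta :
  ratio1 nu (sin theta) =
  Rabs ((2 * INR nu + 1) * sin theta - sin ((2 * INR nu + 1) * theta))
  / ((2 * INR nu + 1) * sin theta) ^ 2.
Proof.
  unfold ratio1. rewrite cheb_odd_sin, Rmult_assoc, <- Rmult_minus_distr_l,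
    Rabs_mult, pow_1_abs, Rmult_1_l.
  reflexivity.
Qed.

Lemma sin_le_id u : 0 <= u -> Rabs (sin u) <= u.
Proof.
  intros hu. destruct (Rle_dec u 1) as [hu1|hu1].
  - pose proof PI2_1.
    rewrite Rabs_right by (apply Rle_ge, sin_ge_0; lra).
    destruct (Req_dec u 0) as [->|hu0]; [rewrite sin_0; lra|].
    left. apply sin_lt_x. lra.
  - apply Rabs_le. pose proof (SIN_bound u). lra.
Qed.

Lemma Rabs_sin_le u : Rabs (sin u) <= Rabs u.
Proof.
  destruct (Rle_dec 0 u) as [hu|hu].
  - rewrite (Rabs_right u) by lra. now apply sin_le_id.
  - rewrite <- Rabs_Ropp, <- sin_neg, (Rabs_left u) by lra. apply sin_le_id. lra.
Qed.

Lemma Rabs_sin_sub_le x y : Rabs (sin x - sin y) <= Rabs (x - y).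
Proof.
  rewrite form4, !Rabs_mult, (Rabs_right 2) by lra.
  assert (hc : Rabs (cos ((x + y) / 2)) <= 1) by (apply Rabs_le; apply COS_bound).
  assert (hs : Rabs (sin ((x - y) / 2)) <= Rabs (x - y) / 2).
  { replace (Rabs (x - y) / 2) with (Rabs ((x - y) / 2))
      by (unfold Rdiv; rewrite Rabs_mult, Rabs_inv, (Rabs_right 2); lra).
    apply Rabs_sin_le. }
  pose proof (Rabs_pos (cos ((x + y) / 2))).
  pose proof (Rabs_pos (sin ((x - y) / 2))).
  nra.
Qed.

Lemma Rabs_sub_sin_le x y :
  0 <= x <= y -> Rabs (x - sin y) <= (x - sin x) + (y - x).
Proof.
  intros hxy.
  assert (hx : 0 <= x - sin x).
  { pose proof (sin_le_id x ltac:(lra)). pose proof (Rle_abs (sin x)). lra. }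
  replace (x - sin y) with ((x - sin x) + (sin x - sin y)) by ring.
  eapply Rle_trans; [apply Rabs_triang|].
  pose proof (Rabs_sin_sub_le x y) as hlip. rewrite (Rabs_left1 (x - y)) in hlip by lra.
  rewrite (Rabs_right (x - sin x)); lra.
Qed.

Lemma sin_ge_cubic x : 0 <= x <= 4 -> x - x ^ 3 / 6 <= sin x.
Proof.
  intros hx. destruct (pre_sin_bound x 0 ltac:(lra) ltac:(lra)) as [H _].
  unfold sin_approx, sin_term in H. simpl in H. unfold Factorial.fact in H. simpl in H.
  lra.
Qed.

Definition sin_defect_taylor x := x / 6 - x ^ 3 / 120 + x ^ 5 / 5040.

Lemma sub_sin_le_taylor x : 0 <= x <= 4 -> x - sin x <= sin_defect_taylor x * x ^ 2.
Proof.
  intros hx. destruct (pre_sin_bound x 1 ltac:(lra) ltac:(lra)) as [H _].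
  unfold sin_approx, sin_term in H. simpl in H. unfold Factorial.fact in H. simpl in H.
  unfold sin_defect_taylor. lra.
Qed.

Lemma sub_sin_le_third_sq x : 3 <= x -> x - sin x <= x ^ 2 / 3.
Proof.
  intros hx. pose proof PI_4. pose proof PI2_3_2.
  destruct (Rle_dec x PI).
  - assert (0 <= sin x) by (apply sin_ge_0; lra). nra.
  - assert (hs : - sin x <= x - PI).
    { replace (- sin x) with (sin (x - PI)) by (rewrite sin_minus, sin_PI, cos_PI; ring).
      pose proof (sin_le_id (x - PI) ltac:(lra)) as h.
      pose proof (Rle_abs (sin (x - PI))). lra. }
    nra.
Qed.

Lemma sub_sin_le_cube_sin theta :
  0 <= theta <= 4 / 5 -> theta - sin theta <= sin theta ^ 3 / 4.
Proof.
  intros ht. pose proof (sin_ge_cubic theta ltac:(lra)) as hs.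
  assert (hth : theta <= 28 / 25 * sin theta) by nra.
  assert (theta ^ 3 <= (28 / 25 * sin theta) ^ 3) by (apply pow_incr; lra).
  nra.
Qed.

Lemma asin_le_4_5 t : 2 * t ^ 2 <= 1 -> asin t <= 4 / 5.
Proof.
  intros ht. pose proof PI2_3_2.
  (* [sin (4/5) >= 4/5 - (4/5)^3/6 > 1/sqrt 2] *)
  assert (h45 : t <= sin (4 / 5)) by (pose proof (sin_ge_cubic (4 / 5) ltac:(lra)); nra).
  apply sin_incr_0; try apply asin_bound; try lra.
  rewrite sin_asin by nra. exact h45.
Qed.

Lemma asin_nonneg t : 0 <= t <= 1 -> 0 <= asin t.
Proof.
  intros ht. pose proof PI2_3_2.
  apply sin_incr_0; try apply asin_bound; try lra.
  rewrite sin_0, sin_asin; lra.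
Qed.

Lemma asin_sub_le t : 0 <= t -> 2 * t ^ 2 <= 1 -> 0 <= asin t - t <= t ^ 3 / 4.
Proof.
  intros ht0 ht.
  assert (hs : sin (asin t) = t) by (apply sin_asin; nra).
  assert (htheta : 0 <= asin t <= 4 / 5) by (split; [apply asin_nonneg | apply asin_le_4_5]; nra).
  pose proof (sin_le_id (asin t) ltac:(lra)). pose proof (Rle_abs (sin (asin t))).
  pose proof (sub_sin_le_cube_sin (asin t) htheta).
  rewrite hs in *. lra.
Qed.

Definition Emaj a := (3 * a ^ 2 - 3 * a + 1) / (6 * a ^ 2).

Lemma sin_defect_taylor_le_Emaj a : 1 <= a <= 3 -> sin_defect_taylor a <= Emaj a.
Proof.
  intros ha.
  (* [5040 a^2 (Emaj a - sin_defect_taylor a)], checked in powers of [a - 1] *)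
  assert (hpos : 0 <= 2520 * a ^ 2 - 2520 * a + 840 - 840 * a ^ 3 + 42 * a ^ 5 - a ^ 7).
  { set (u := a - 1). assert (hu : 0 <= u <= 2) by (unfold u; lra).
    replace a with (1 + u) by (unfold u; ring).
    assert (0 <= u ^ 2 * (175 * u ^ 2 - 455 * u + 399)) by (apply Rmult_le_pos; nra).
    assert (0 <= u ^ 5 * (21 - 7 * u - u ^ 2)) by (apply Rmult_le_pos; [apply pow_le|]; nra).
    nra. }
  unfold sin_defect_taylor, Emaj. apply Rle_div_r; nra.
Qed.

Lemma sin_defect_taylor_incr x y :
  0 <= x -> x <= y -> y <= 3 -> sin_defect_taylor x <= sin_defect_taylor y.
Proof.
  intros hx hxy hy.
  set (s2 := x ^ 2 + x * y + y ^ 2).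
  set (s4 := x ^ 4 + x ^ 3 * y + x ^ 2 * y ^ 2 + x * y ^ 3 + y ^ 4).
  assert (hs4 : 5 * s2 ^ 2 <= 9 * s4).
  { assert (9 * s4 - 5 * s2 ^ 2 = (x - y) ^ 2 * (4 * x ^ 2 + 7 * x * y + 4 * y ^ 2))
      by (unfold s2, s4; ring).
    assert (0 <= (x - y) ^ 2 * (4 * x ^ 2 + 7 * x * y + 4 * y ^ 2))
      by (apply Rmult_le_pos; nra).
    lra. }
  (* the difference quotient is at least [1/6 - s2/120 + s2^2/9072], which has no real root *)
  assert (hquot : 0 <= 1 / 6 - s2 / 120 + s4 / 5040).
  { assert (0 <= (s2 - 189 / 5) ^ 2) by apply pow2_ge_0. nra. }
  assert (sin_defect_taylor y - sin_defect_taylor x = (y - x) * (1 / 6 - s2 / 120 + s4 / 5040))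
    by (unfold sin_defect_taylor, s2, s4; field).
  nra.
Qed.

Lemma third_le_Emaj a : 3 <= a -> 1 / 3 <= Emaj a.
Proof.
  intros ha. assert (0 <= (a - 3) * a) by (apply Rmult_le_pos; lra).
  unfold Emaj. apply (Rle_div_r _ _ (6 * a ^ 2)); nra.
Qed.

Lemma sub_sin_le_Emaj x a : 1 <= a -> 0 <= x <= a -> x - sin x <= Emaj a * x ^ 2.
Proof.
  intros ha hx. assert (hx2 : 0 <= x ^ 2) by nra.
  destruct (Rle_dec a 3) as [ha3|ha3].
  - pose proof (sub_sin_le_taylor x ltac:(lra)).
    pose proof (sin_defect_taylor_incr x a ltac:(lra) ltac:(lra) ha3).
    pose proof (sin_defect_taylor_le_Emaj a ltac:(lra)).
    nra.
  - pose proof (third_le_Emaj a ltac:(lra)).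
    destruct (Rle_dec x 3).
    + pose proof (sub_sin_le_taylor x ltac:(lra)).
      pose proof (sin_defect_taylor_incr x 3 ltac:(lra) ltac:(lra) ltac:(lra)).
      assert (sin_defect_taylor 3 <= 1 / 3) by (unfold sin_defect_taylor; lra).
      nra.
    + pose proof (sub_sin_le_third_sq x ltac:(lra)). nra.
Qed.

Definition Gmaj a k := (1 - k) ^ 2 * (Emaj a + 5 * a * k / 6) + 3 / 4 * k * (1 - k).

Lemma Emaj_add_le_Gmaj a k : 1 <= a -> 0 < k <= 1 / 3 -> Emaj a + a * k ^ 2 / 4 <= Gmaj a k.
Proof.
  intros ha hk. unfold Gmaj. set (e := Emaj a).
  assert (he : e <= 3 / 10 + 7 * a / 60).
  { unfold e, Emaj. apply (Rle_div_l _ _ (6 * a ^ 2)); [nra|].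
    assert (0 <= (a - 1) * a ^ 2) by (apply Rmult_le_pos; nra). nra. }
  (* the difference of the two sides is [k] times a quadratic in [k] that stays
     nonnegative on [0, 1/3] *)
  set (B := e - 23 * a / 12 - 3 / 4).
  assert (hB : k * B >= B / 3) by (unfold B; nra).
  assert (hf : 0 <= 5 * a / 6 + 3 / 4 - 2 * e + k * B + 5 * a * k ^ 2 / 6) by (unfold B in *; nra).
  assert (0 <= k * (5 * a / 6 + 3 / 4 - 2 * e + k * B + 5 * a * k ^ 2 / 6))
    by (apply Rmult_le_pos; lra).
  unfold B in *. nra.
Qed.

(* For [a >= 1], [b > 1] and [m >= 1] every summand on the right is nonnegative. *)
Lemma u1_u2_sub_Gmaj b m a w k :
  b <> 0 -> a <> 0 -> 2 * m + 1 <> 0 -> w = / b -> k = / (2 * m + 1) ->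
  ((12 * b - 8) * m ^ 3 + (12 * b ^ 3 + 18 * b) * m ^ 2 + 2 * b ^ 2 * m)
    / (3 * b ^ 3 * (2 * m + 1) ^ 3) * a
  + (2 * (b - 1) ^ 2 * m ^ 2 + 2 * b * (b - 1) * m) / (b ^ 2 * (2 * m + 1) ^ 2)
  - Gmaj a k
  = (1 - k) ^ 2 * (a * w - 1) ^ 2 * (3 * a - 1 - 2 * a * w) / (6 * a ^ 2)
    + (1 - k) ^ 2 * k * a * (1 - w) ^ 2 * (1 + 2 * w) / 6
    + k * (1 - k) * ((3 / 2 * a * (1 - k) - 1) * w ^ 2 + (w - 1 / 2) ^ 2)
    + 2 * w * m * a / (3 * (2 * m + 1) ^ 3).
Proof. intros hb ha hm -> ->. unfold Gmaj, Emaj. field. auto. Qed.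

Lemma Gmaj_le_u beta nu a : 1 < beta -> (1 <= nu)%nat -> 1 <= a ->
  Gmaj a (/ (2 * INR nu + 1)) <= u1 beta nu * a + u2 beta nu.
Proof.
  intros hb hnu ha.
  assert (hm : 1 <= INR nu) by (apply (le_INR 1); exact hnu).
  set (m := INR nu) in *. set (k := / (2 * m + 1)). set (w := / beta).
  assert (hk : 0 < k <= 1 / 3).
  { unfold k. split; [apply Rinv_0_lt_compat; lra|].
    rewrite <- Rdiv_1_l. apply Rle_div_l; lra. }
  assert (hw : 0 < w < 1).
  { unfold w. split; [apply Rinv_0_lt_compat; lra|].
    rewrite <- Rinv_1. apply Rinv_lt_contravar; lra. }
  assert (hid := u1_u2_sub_Gmaj beta m a w k ltac:(lra) ltac:(lra) ltac:(lra) eq_refl eq_refl).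
  unfold u1, u2. cbv zeta. fold m.
  assert (0 <= (1 - k) ^ 2 * (a * w - 1) ^ 2 * (3 * a - 1 - 2 * a * w) / (6 * a ^ 2)).
  { apply Rle_div_r; [nra|]. rewrite Rmult_0_l.
    assert (a * w <= a) by nra.
    apply Rmult_le_pos; [apply Rmult_le_pos; apply pow2_ge_0 | lra]. }
  assert (0 <= (1 - k) ^ 2 * k * a * (1 - w) ^ 2 * (1 + 2 * w) / 6).
  { apply Rle_div_r; [lra|]. rewrite Rmult_0_l.
    repeat apply Rmult_le_pos; nra. }
  assert (0 <= k * (1 - k) * ((3 / 2 * a * (1 - k) - 1) * w ^ 2 + (w - 1 / 2) ^ 2)).
  { assert (0 <= 3 / 2 * a * (1 - k) - 1) by nra.
    apply Rmult_le_pos; [apply Rmult_le_pos; lra|].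
    apply Rplus_le_le_0_compat; [apply Rmult_le_pos; [lra|] |]; apply pow2_ge_0. }
  assert (0 <= 2 * w * m * a / (3 * (2 * m + 1) ^ 3)).
  { apply Rle_div_r; [apply Rmult_lt_0_compat; [lra|apply pow_lt; lra]|].
    rewrite Rmult_0_l. repeat apply Rmult_le_pos; lra. }
  lra.
Qed.

Lemma ratio1_le_Emaj nu alpha t :
  1 <= alpha -> alpha <= (2 * INR nu + 1) / sqrt 2 -> 0 < t <= alpha / (2 * INR nu + 1) ->
  ratio1 nu t <= Emaj alpha + alpha * (/ (2 * INR nu + 1)) ^ 2 / 4.
Proof.
  intros ha hal [ht0 ht].
  pose proof (pos_INR nu). set (N := 2 * INR nu + 1) in *.
  assert (hN : 1 <= N) by (unfold N; lra).
  assert (hx : N * t <= alpha) by (rewrite Rmult_comm; apply Rle_div_r; lra).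
  assert (ht2 : 2 * t ^ 2 <= 1).
  { pose proof (sqrt_lt_R0 2 ltac:(lra)). pose proof (sqrt_sqrt 2 ltac:(lra)).
    assert (alpha * sqrt 2 <= N) by (apply Rle_div_r; lra).
    assert (N * (t * sqrt 2) <= N * 1) by nra.
    assert (t * sqrt 2 <= 1) by nra.
    nra. }
  pose proof (asin_sub_le t ltac:(lra) ht2) as hasin.
  rewrite <- (sin_asin t), ratio1_sin, sin_asin by nra. fold N.
  set (k := / N).
  pose proof (Rabs_sub_sin_le (N * t) (N * asin t) ltac:(nra)).
  pose proof (sub_sin_le_Emaj (N * t) alpha ha ltac:(nra)).
  assert (hdiff : N * asin t - N * t <= alpha * k ^ 2 / 4 * (N * t) ^ 2).
  { assert (N * (t ^ 3 / 4) = N * t * k ^ 2 / 4 * (N * t) ^ 2) by (unfold k; field; lra).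
    assert (0 <= (alpha - N * t) * (k ^ 2 / 4 * (N * t) ^ 2))
      by (apply Rmult_le_pos; [lra | apply Rmult_le_pos; nra]).
    nra. }
  apply Rle_div_l; [apply pow_lt; nra | lra].
Qed.

Lemma S1_le_u nu alpha beta :
  (1 <= nu)%nat -> 1 <= alpha -> 1 < beta -> alpha <= (2 * INR nu + 1) / sqrt 2 ->
  S1_le nu alpha (u1 beta nu * alpha + u2 beta nu).
Proof.
  intros hnu ha hb hal t ht.
  eapply Rle_trans; [now apply (ratio1_le_Emaj nu alpha)|].
  eapply Rle_trans; [|now apply Gmaj_le_u].
  apply Emaj_add_le_Gmaj; [exact ha|].
  pose proof (le_INR 1 nu hnu) as hm. simpl in hm.
  split; [apply Rinv_0_lt_compat; lra|].
  rewrite <- Rdiv_1_l. apply Rle_div_l; lra.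
Qed.

Lemma one_lt_div_floor x n : 0 <= x -> x < n -> 1 < (2 * n + 1) / (2 * floorR x + 1).
Proof.
  intros hx hxn. unfold floorR. destruct (base_Int_part x) as [hle hgt].
  assert (hz : (0 <= Int_part x)%Z).
  { assert (hlt : (-1 < Int_part x)%Z) by (apply lt_IZR; lra). lia. }
  apply IZR_le in hz.
  apply Rlt_div_r; lra.
Qed.

Lemma u1_5_2_le nu : (31 <= nu)%nat -> u1 (5 / 2) nu <= 2344592 / 31255875.
Proof.
  intros h. apply le_INR in h. simpl in h.
  unfold u1. cbv zeta. set (n := INR nu) in *.
  apply Rle_div_l; [apply Rmult_lt_0_compat; [lra | apply pow_lt; lra]|].
  assert (E : 2344592 / 31255875 * (3 * (5 / 2) ^ 3 * (2 * n + 1) ^ 3)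
    - ((12 * (5 / 2) - 8) * n ^ 3 + (12 * (5 / 2) ^ 3 + 18 * (5 / 2)) * n ^ 2
       + 2 * (5 / 2) ^ 2 * n)
    = (n - 31) * (510914 / 83349 * n ^ 2 - 46841 / 166698 * n - 9454 / 83349)) by field.
  assert (0 <= (n - 31) * (510914 / 83349 * n ^ 2 - 46841 / 166698 * n - 9454 / 83349))
    by (apply Rmult_le_pos; nra).
  lra.
Qed.

Lemma u2_5_2_le nu : (31 <= nu)%nat -> u2 (5 / 2) nu <= 6076 / 33075.
Proof.
  intros h. apply le_INR in h. simpl in h.
  unfold u2. cbv zeta. set (n := INR nu) in *.
  apply Rle_div_l; [apply Rmult_lt_0_compat; [lra | apply pow_lt; lra]|].
  assert (E : 6076 / 33075 * ((5 / 2) ^ 2 * (2 * n + 1) ^ 2)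
    - (2 * (5 / 2 - 1) ^ 2 * n ^ 2 + 2 * (5 / 2) * (5 / 2 - 1) * n)
    = (n - 31) * (5 / 54 * n - 1 / 27)) by field.
  assert (0 <= (n - 31) * (5 / 54 * n - 1 / 27)) by (apply Rmult_le_pos; lra).
  lra.
Qed.

Theorem mainTheorem4 :
  (forall (nu : nat) (alpha beta : R),
      (1 <= nu)%nat -> 1 < alpha -> 1 < beta ->
      (2 * INR nu + 1) / (2 * floorR (INR nu / beta) + 1) <= alpha ->
      alpha <= (2 * INR nu + 1) / sqrt 2 ->
      S1_le nu alpha (u1 beta nu * alpha + u2 beta nu))
  /\
  (forall (nu : nat) (alpha : R),
      (31 <= nu)%nat ->
      (2 * INR nu + 1) / (2 * floorR (2 * INR nu / 5) + 1) <= alpha ->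
      alpha <= (2 * INR nu + 1) / sqrt 2 ->
      S1_le nu alpha (2344592 / 31255875 * alpha + 6076 / 33075)).
Proof.
  split.
  - intros nu alpha beta hnu ha hb _ hal. apply S1_le_u; auto; lra.
  - intros nu alpha hnu hfl hal t ht.
    pose proof (le_INR _ _ hnu) as hn. simpl in hn.
    assert (ha : 1 < alpha).
    { refine (Rlt_le_trans _ _ _ _ hfl). apply one_lt_div_floor; lra. }
    pose proof (S1_le_u nu alpha (5 / 2) ltac:(lia) ltac:(lra) ltac:(lra) hal t ht).
    pose proof (u1_5_2_le nu hnu). pose proof (u2_5_2_le nu hnu).
    nra.
Qed.
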